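(* Let $n\ge2$, $y=(y_1,\dots,y_{n-1},q)\in\mathbb C^n$ and $j\in\{1,\dots,[n/2]\}$. Let $\tilde y^j\in\mathbb C^n$ be obtained from $y$ by interchanging the coordinates $y_j$ and $y_{n-j}$ (all other coordinates, including $q$, unchanged). Then $y\in\widetilde{\mathbb G}_n$ if and only if $\tilde y^j\in\widetilde{\mathbb G}_n$, and $y\in\widetilde\Gamma_n$ if and only if $\tilde y^j\in\widetilde\Gamma_n$.
   Context: $\mathbb D$ is the open unit disc. $\widetilde{\mathbb G}_n=\{(y_1,\dots,y_{n-1},q)\in\mathbb C^n: q\in\mathbb D,\ y_j=\beta_j+\bar\beta_{n-j}q$ for some $\beta_j\in\mathbb C$ with $|\beta_j|+|\beta_{n-j}|<\binom{n}{j}$, $j=1,\dots,n-1\}$; $\widetilde\Gamma_n$ is its closure. *)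

From HB Require Import structures.
From mathcomp Require Import all_boot all_order all_algebra.
From mathcomp Require Import complex.
Set Implicit Arguments. Unset Strict Implicit. Unset Printing Implicit Defensive.
Import Order.TTheory GRing.Theory Num.Theory.
Local Open Scope ring_scope.
Local Open Scope complex_scope.

(* A point y = (y_1,...,y_{n-1}, q) of C^n is a row vector 'rV[R[i]]_n.
   Column index k (0-based) holds y_{k+1} for k < n-1, and column n-1 holds q. *)

(* coordinate with 0-based nat index k (0 if k >= n; never used out of range) *)
Definition coord (R : rcfType) (n : nat) (y : 'rV[R[i]]_n) (k : nat) : R[i] :=
  if insub k is Some i then y 0 i else 0.

Definition ycoord (R : rcfType) (n : nat) (y : 'rV[R[i]]_n) (j : nat) : R[i] :=
  coord y j.-1.

Definition qcoord (R : rcfType) (n : nat) (y : 'rV[R[i]]_n) : R[i] :=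
  coord y n.-1.

Definition Gtilde (R : rcfType) (n : nat) (y : 'rV[R[i]]_n) : Prop :=
  `|qcoord y| < 1 /\
  exists beta : nat -> R[i],
    forall j : nat, (1 <= j <= n.-1)%N ->
      ycoord y j = beta j + (beta (n - j)%N)^* * qcoord y /\
      `|beta j| + `|beta (n - j)%N| < ('C(n, j))%:R.

(* Its closure \widetilde{Gamma}_n in C^n (the usual Euclidean topology,
   written with the equivalent max-coordinate distance). *)
Definition Gammatilde (R : rcfType) (n : nat) (y : 'rV[R[i]]_n) : Prop :=
  forall eps : R, 0 < eps ->
    exists z : 'rV[R[i]]_n, Gtilde z /\
      forall k : 'I_n, `|y 0 k - z 0 k| < eps%:C.

Definition swapj (R : rcfType) (n : nat) (j : nat) (y : 'rV[R[i]]_n) : 'rV[R[i]]_n :=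
  \row_(k < n)
     (if (k == j.-1 :> nat) then coord y (n - j).-1
      else if (k == (n - j).-1 :> nat) then coord y j.-1
      else y 0 k).

From Pilot Require Import Defs.
From HB Require Import structures.
From mathcomp Require Import all_boot all_order all_algebra.
From mathcomp Require Import complex reals.
From mathcomp Require Import zify.
Import Order.TTheory GRing.Theory Num.Theory.
Local Open Scope ring_scope.

(* The swap of y_j and y_{n-j} is a transposition of coordinates, and on
   indices 1 <= k <= n-1 the transposition j <-> n-j commutes with the
   reflection k |-> n-k and preserves C(n, k).  Hence permuting the beta's by
   the same transposition turns a representation of y into one of the swapped
   point; closures are preserved because coordinate permutations are
   isometries for the max-coordinate distance. *)

Definition swapn (a b m : nat) : nat :=
  if m == a then b else if m == b then a else m.

Section Transposition.

Variables a b : nat.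

Lemma swapnK : involutive (swapn a b).
Proof. by move=> m; rewrite /swapn; repeat case: eqP => /=; lia. Qed.

Lemma swapn_id m : m != a -> m != b -> swapn a b m = m.
Proof. by rewrite /swapn => /negbTE-> /negbTE->. Qed.

Lemma swapn_in (P : pred nat) m : P a -> P b -> P m -> P (swapn a b m).
Proof. by rewrite /swapn; case: eqP => // _; case: eqP. Qed.

Lemma swapn_pred m :
  (0 < a)%N -> (0 < b)%N -> (0 < m)%N -> (swapn a b m).-1 = swapn a.-1 b.-1 m.-1.
Proof. by rewrite /swapn; repeat case: eqP => /=; lia. Qed.

Lemma swapn_subn n m :
  (a + b = n)%N -> (m <= n)%N -> swapn a b (n - m) = (n - swapn a b m)%N.
Proof. by rewrite /swapn; repeat case: eqP => /=; lia. Qed.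

Lemma bin_swapn n m : (a + b = n)%N -> 'C(n, swapn a b m) = 'C(n, m).
Proof.
move=> abn; have -> : b = (n - a)%N by lia.
have a_le_n : (a <= n)%N by lia.
rewrite /swapn; case: eqP => [->|_]; first exact: bin_sub.
by case: eqP => [->|_] //; rewrite bin_sub.
Qed.

End Transposition.

Section SwapCoordinates.

Variables (R : rcfType) (n : nat).
Implicit Types (y z : 'rV[R[i]]_n) (j k m : nat).

Lemma coord_ord y (k : 'I_n) : Defs.coord y k = y 0 k.
Proof. by rewrite /Defs.coord valK. Qed.

Lemma coord_swapj j y m : (0 < n)%N -> (j <= n)%N ->
  Defs.coord (swapj j y) m = Defs.coord y (swapn j.-1 (n - j).-1 m).
Proof.
move=> n_gt0 jn; rewrite /Defs.coord /swapn.
case: insubP => [k _ <-|m_out]; first by rewrite mxE; do 2?case: eqP => // _; rewrite valK.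
by do 2!(case: eqP => [?|_]; first lia); rewrite insubF // (negbTE m_out).
Qed.

Lemma swapjK j y : (0 < n)%N -> (j <= n)%N -> swapj j (swapj j y) = y.
Proof.
by move=> n_gt0 jn; apply/rowP => k; rewrite -!coord_ord !coord_swapj // swapnK.
Qed.

Section InnerIndex.

Variable j : nat.
Hypothesis j_inner : (1 <= j <= n.-1)%N.

Lemma qcoord_swapj y : qcoord (swapj j y) = qcoord y.
Proof. by rewrite /qcoord coord_swapj ?swapn_id //; lia. Qed.

Lemma ycoord_swapj y k : (1 <= k)%N ->
  ycoord (swapj j y) k = ycoord y (swapn j (n - j) k).
Proof. by move=> k_gt0; rewrite /ycoord coord_swapj -?swapn_pred //; lia. Qed.

Lemma Gtilde_swapj y : Gtilde y -> Gtilde (swapj j y).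
Proof.
move=> [q_lt1 [beta hbeta]]; split; first by rewrite qcoord_swapj.
exists (beta \o swapn j (n - j)) => k k_inner /=.
set k' := swapn j (n - j) k.
have j_n : (j + (n - j) = n)%N by lia.
have k'_inner : (1 <= k' <= n.-1)%N by apply: (@swapn_in _ _ (fun k => 1 <= k <= n.-1)%N); lia.
have [y_k bound_k] := hbeta k' k'_inner.
rewrite qcoord_swapj ycoord_swapj ?swapn_subn //; try lia.
by rewrite -(bin_swapn _ _ _ k j_n) -/k'.
Qed.

End InnerIndex.

Lemma Gammatilde_reindex (f : 'rV[R[i]]_n -> 'rV[R[i]]_n) (s : nat -> nat) :
  (forall m, (m < n)%N -> (s m < n)%N) ->
  (forall y m, Defs.coord (f y) m = Defs.coord y (s m)) ->
  (forall z, Gtilde z -> Gtilde (f z)) ->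
  forall y, Gammatilde y -> Gammatilde (f y).
Proof.
move=> s_lt f_coord fG y yGamma eps eps_gt0.
have [z [zG near_yz]] := yGamma eps eps_gt0.
exists (f z); split=> [|k]; first exact: fG.
have := near_yz (Ordinal (s_lt k (ltn_ord k))).
by rewrite -!coord_ord !f_coord.
Qed.

Lemma Gammatilde_swapj j y :
  (1 <= j <= n.-1)%N -> Gammatilde y -> Gammatilde (swapj j y).
Proof.
move=> j_inner.
have swap_lt m : (m < n)%N -> (swapn j.-1 (n - j).-1 m < n)%N.
  by move=> m_lt; apply: (@swapn_in _ _ (fun k => k < n)%N) => //; lia.
apply: (Gammatilde_reindex _ _ swap_lt) => [z m|z]; last exact: Gtilde_swapj.
by apply: coord_swapj; lia.
Qed.

End SwapCoordinates.

Theorem mainTheorem4 (R : realType) (n : nat) (y : 'rV[R[i]]_n) (j : nat) :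
  (2 <= n)%N -> (1 <= j <= n./2)%N ->
  (Gtilde y <-> Gtilde (swapj j y)) /\
  (Gammatilde y <-> Gammatilde (swapj j y)).
Proof.
move=> n_ge2 j_half.
have j_inner : (1 <= j <= n.-1)%N by lia.
have swapjK' : swapj j (swapj j y) = y by apply: swapjK; lia.
split; split=> [|h]; first exact: Gtilde_swapj.
- by rewrite -swapjK'; apply: Gtilde_swapj.
- exact: Gammatilde_swapj.
- by rewrite -swapjK'; apply: Gammatilde_swapj.
Qed.
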